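(* Let $n\ge1$ and $K\in\mathcal S_n\setminus\{\emptyset,\mathbb R^n\}$. Then \[ \mathrm{Outrad}(K)+\mathrm{Inrad}(K^c)=1. \] Moreover, there is a unique point $x$ with $K\subseteq B(x,\mathrm{Outrad}(K))$, and it is also the unique point with $B(x,\mathrm{Inrad}(K^c))\subseteq K^c$; i.e., the smallest ball containing $K$ and the largest ball contained in $K^c$ are unique, concentric, and $c$-dual to one another.
   Context: $B(x,r)$ is the closed Euclidean ball. For $A\subseteq\mathbb R^n$, $A^c=\bigcap_{x\in A}B(x,1)$. $\mathcal S_n$ is the class of all sets of the form $\bigcap_{x\in A}B(x,1)$, $A\subseteq\mathbb R^n$. $\mathrm{Outrad}(K)=\min\{R:\exists x,\ K\subseteq B(x,R)\}$ and $\mathrm{Inrad}(K)=\max\{r:\exists x,\ B(x,r)\subseteq K\}$. *)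

From HB Require Import structures.
From mathcomp Require Import all_boot all_order all_algebra.
From mathcomp Require Import all_classical all_reals.
Set Implicit Arguments. Unset Strict Implicit. Unset Printing Implicit Defensive.
Import Order.TTheory GRing.Theory Num.Theory.
Local Open Scope ring_scope.
Local Open Scope classical_set_scope.

Section Defs.
Variable (R : realType) (n : nat).

Definition edist (x y : 'rV[R]_n) : R :=
  Num.sqrt (\sum_(i < n) (x ord0 i - y ord0 i) ^+ 2).

Definition cball (x : 'rV[R]_n) (r : R) : set 'rV[R]_n :=
  [set y | edist x y <= r].

(* A^c = \bigcap_{x in A} B(x,1)  (= R^n when A is empty) *)
Definition cdual (A : set 'rV[R]_n) : set 'rV[R]_n :=
  [set y | forall x, A x -> y \in cball x 1].

Definition inS (K : set 'rV[R]_n) : Prop :=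
  exists A : set 'rV[R]_n, K = cdual A.

Definition Outrad (K : set 'rV[R]_n) : R :=
  inf [set r : R | exists x, K `<=` cball x r].

Definition Inrad (K : set 'rV[R]_n) : R :=
  sup [set r : R | exists x, cball x r `<=` K].

End Defs.

From HB Require Import structures.
From mathcomp Require Import all_boot all_order all_algebra.
From mathcomp Require Import all_classical all_reals.
From mathcomp Require Import ring lra.
Import Order.TTheory GRing.Theory Num.Theory.
Local Open Scope ring_scope.
Local Open Scope classical_set_scope.
Set Implicit Arguments. Unset Strict Implicit. Unset Printing Implicit Defensive.

(* By the parallelogram law, the midpoint of the centres of two balls enclosing
   K encloses K with a smaller radius, which cannot drop below Outrad K; so the
   centres of nearly optimal enclosing balls cluster, and their coordinatewise
   limit is the unique circumcentre.  Duality: if K lies in B(x, R) then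
   B(x, 1 - R) lies in K^c by the triangle inequality; conversely, if B(y, s)
   lies in K^c, the point of B(y, s) pushed from y directly away from some k in
   K is within 1 of k, which forces d(y, k) <= 1 - s.  Membership in S_n is
   only needed to place K in some B(a, 1), a in A, where A is nonempty because
   K differs from R^n. *)

Lemma sum_mul_le_sqrt (R : realType) (I : finType) (u v : I -> R) :
  \sum_i u i * v i <= Num.sqrt (\sum_i u i ^+ 2) * Num.sqrt (\sum_i v i ^+ 2).
Proof.
have lagrange : \sum_i \sum_j (u i * v j - u j * v i) ^+ 2 +
    2 * (\sum_i u i * v i) ^+ 2 = 2 * ((\sum_i u i ^+ 2) * (\sum_j v j ^+ 2)).
  rewrite expr2 !big_distrlr /= mulr_sumr mulr_natl mulr2n.
  rewrite [X in _ = _ + X]exchange_big -!big_split /=; apply: eq_bigr => i _.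
  rewrite mulr_sumr -!big_split /=; apply: eq_bigr => j _; ring.
have CS2 : (\sum_i u i * v i) ^+ 2 <= (\sum_i u i ^+ 2) * (\sum_i v i ^+ 2).
  rewrite -(ler_pM2l (ltr0n R 2)) -lagrange lerDr.
  by apply: sumr_ge0 => i _; apply: sumr_ge0 => j _; apply: sqr_ge0.
rewrite -sqrtrM; last by apply: sumr_ge0 => i _; apply: sqr_ge0.
by apply: le_trans (ler_norm _) _; rewrite -sqrtr_sqr ler_wsqrtr.
Qed.

Section EuclideanDistance.
Variables (R : realType) (n : nat).
Implicit Types (x y z : 'rV[R]_n) (r : R).

Definition sqdist x y : R := \sum_(i < n) (x ord0 i - y ord0 i) ^+ 2.

Lemma edistE x y : edist x y = Num.sqrt (sqdist x y).
Proof. by []. Qed.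

Lemma sqdist_ge0 x y : 0 <= sqdist x y.
Proof. by apply: sumr_ge0 => i _; apply: sqr_ge0. Qed.

Lemma edist_ge0 x y : 0 <= edist x y.
Proof. exact: sqrtr_ge0. Qed.

Lemma sqdistC x y : sqdist x y = sqdist y x.
Proof. by apply: eq_bigr => i _; rewrite -sqrrN opprB. Qed.

Lemma edistC x y : edist x y = edist y x.
Proof. by rewrite !edistE sqdistC. Qed.

Lemma edistxx x : edist x x = 0.
Proof.
by rewrite edistE /sqdist big1 ?sqrtr0 // => i _; rewrite subrr expr0n.
Qed.

Lemma sqr_edist x y : edist x y ^+ 2 = sqdist x y.
Proof. by rewrite sqr_sqrtr // sqdist_ge0. Qed.

Lemma edist_le_sqr x y r : 0 <= r -> (edist x y <= r) = (sqdist x y <= r ^+ 2).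
Proof. by move=> r_ge0; rewrite -sqr_edist ler_pXn2r ?nnegrE ?edist_ge0. Qed.

Lemma edist_sqr_eq x y r : 0 <= r -> sqdist x y = r ^+ 2 -> edist x y = r.
Proof. by rewrite edistE => r_ge0 ->; rewrite sqrtr_sqr ger0_norm. Qed.

Lemma sqr_coord_le_sqdist x y i : (x ord0 i - y ord0 i) ^+ 2 <= sqdist x y.
Proof.
by rewrite /sqdist (bigD1 i) //= lerDl; apply: sumr_ge0 => j _; apply: sqr_ge0.
Qed.

Lemma sqdist_le0 x y : sqdist x y <= 0 -> x = y.
Proof.
move=> le0; apply/rowP => i; apply/eqP; rewrite -subr_eq0 -sqrf_eq0 eq_le.
by rewrite sqr_ge0 andbT (le_trans (sqr_coord_le_sqdist x y i)).
Qed.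

Lemma edist_triangle x y z : edist x z <= edist x y + edist y z.
Proof.
rewrite edist_le_sqr ?addr_ge0 ?edist_ge0 // sqrrD !sqr_edist.
have -> : sqdist x z = sqdist x y + sqdist y z +
    2 * \sum_i (x ord0 i - y ord0 i) * (y ord0 i - z ord0 i).
  by rewrite /sqdist mulr_sumr -!big_split /=; apply: eq_bigr => i _; ring.
rewrite [leRHS]addrAC lerD2l -[leRHS]mulr_natl ler_pM2l //.
exact: sum_mul_le_sqrt.
Qed.

Lemma sqdist_parallelogram x y z :
  4 * sqdist (2^-1 *: (x + y)) z + sqdist x y = 2 * (sqdist x z + sqdist y z).
Proof.
rewrite /sqdist !mulr_sumr -!big_split /= mulr_sumr; apply: eq_bigr => i _.
by rewrite !mxE; field.
Qed.

Lemma sqdist_extend x y c :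
  sqdist (x + c *: (x - y)) x = c ^+ 2 * sqdist x y /\
  sqdist (x + c *: (x - y)) y = (1 + c) ^+ 2 * sqdist x y.
Proof.
by split; rewrite /sqdist mulr_sumr; apply: eq_bigr => i _; rewrite !mxE; ring.
Qed.

Lemma exists_edist x r : (0 < n)%N -> 0 <= r ->
  exists y, edist x y = r.
Proof.
move=> n_gt0 r_ge0; pose i0 : 'I_n := Ordinal n_gt0.
exists (x + r *: delta_mx 0 i0); apply: edist_sqr_eq => //.
rewrite /sqdist (bigD1 i0) //= big1 ?addr0 => [|j /negbTE ji0];
  rewrite !mxE ?eqxx ?ji0 /=; ring.
Qed.

Lemma edist_extend x y r : (0 < n)%N -> 0 <= r ->
  exists z, edist x z = r /\ edist z y = edist x y + r.
Proof.
move=> n_gt0 r_ge0; have [<-|neq_xy] := eqVneq x y.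
  have [z xz] := exists_edist x n_gt0 r_ge0.
  by exists z; split; rewrite // edistC xz edistxx add0r.
have d_gt0 : 0 < edist x y.
  rewrite lt_def edist_ge0 andbT; apply: contraNneq neq_xy => /eqP.
  by rewrite edistE sqrtr_eq0 => /sqdist_le0 ->.
have [ext_x ext_y] := sqdist_extend x y (r / edist x y).
exists (x + (r / edist x y) *: (x - y)); split.
  rewrite edistC; apply: edist_sqr_eq => //.
  by rewrite ext_x -sqr_edist -exprMn divfK ?gt_eqF.
apply: edist_sqr_eq; first by rewrite addr_ge0 ?edist_ge0.
by rewrite ext_y -sqr_edist -exprMn mulrDl mul1r divfK ?gt_eqF // addrC.
Qed.

End EuclideanDistance.

Section Circumcenter.
Variables (R : realType) (n : nat) (K : set 'rV[R]_n).
Variables (k0 a : 'rV[R]_n) (r0 : R).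
Hypotheses (Kk0 : K k0) (K_sub_ball : K `<=` cball a r0).
Implicit Types (c x : 'rV[R]_n) (r e : R).

Let radii := [set r : R | exists x, K `<=` cball x r].

Lemma enclosing_radius_ge0 x r : K `<=` cball x r -> 0 <= r.
Proof. by move=> /(_ k0 Kk0); apply: le_trans; apply: edist_ge0. Qed.

Let radii_lbound : lbound radii 0.
Proof. by move=> r [x]; apply: enclosing_radius_ge0. Qed.

Let has_inf_radii : has_inf radii.
Proof. by split; [exists r0, a | exists 0; apply: radii_lbound]. Qed.

Lemma Outrad_ge0 : 0 <= Outrad K.
Proof. by apply: lb_le_inf; [exists r0, a | apply: radii_lbound]. Qed.

Lemma Outrad_le x r : K `<=` cball x r -> Outrad K <= r.
Proof.
by move=> Kxr; apply: ge_inf; [exists 0; apply: radii_lbound | exists x].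
Qed.

Lemma Outrad_adherent t : 0 < t ->
  exists x r, K `<=` cball x r /\ r < Outrad K + t.
Proof.
move=> t_gt0; have [r [x Kxr] r_lt] := inf_adherent t_gt0 has_inf_radii.
by exists x, r.
Qed.

Lemma sqdist_enclosing_centers c1 r1 c2 r2 :
  K `<=` cball c1 r1 -> K `<=` cball c2 r2 ->
  4 * Outrad K ^+ 2 + sqdist c1 c2 <= 2 * (r1 ^+ 2 + r2 ^+ 2).
Proof.
move=> Kc1 Kc2; have r1_ge0 := enclosing_radius_ge0 Kc1.
have r2_ge0 := enclosing_radius_ge0 Kc2.
set Q := (2 * (r1 ^+ 2 + r2 ^+ 2) - sqdist c1 c2) / 4.
have mid_bound k : K k -> sqdist (2^-1 *: (c1 + c2)) k <= Q.
  move=> Kk; have := sqdist_parallelogram c1 c2 k.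
  move: (Kc1 k Kk) (Kc2 k Kk); rewrite /cball /= !edist_le_sqr // => d1 d2.
  rewrite /Q ler_pdivlMr //; lra.
have Q_ge0 : 0 <= Q by apply: le_trans (mid_bound _ Kk0); apply: sqdist_ge0.
have : Outrad K <= Num.sqrt Q.
  apply: (@Outrad_le (2^-1 *: (c1 + c2))) => k Kk.
  by rewrite /cball /= edist_le_sqr ?sqrtr_ge0 // sqr_sqrtr // mid_bound.
rewrite -(ler_pXn2r (_ : 0 < 2)%N) ?nnegrE ?Outrad_ge0 ?sqrtr_ge0 //.
rewrite sqr_sqrtr //.
by rewrite /Q ler_pdivlMr //; lra.
Qed.

Lemma circumcenter_unique c1 c2 :
  K `<=` cball c1 (Outrad K) -> K `<=` cball c2 (Outrad K) -> c1 = c2.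
Proof.
move=> Kc1 Kc2; apply: sqdist_le0.
by have := sqdist_enclosing_centers Kc1 Kc2; lra.
Qed.

Definition approx_circumcenter c e :=
  0 <= e /\
  exists r, K `<=` cball c r /\ 4 * (r ^+ 2 - Outrad K ^+ 2) <= e ^+ 2.

Lemma approx_circumcenter_enclosing c e :
  approx_circumcenter c e -> K `<=` cball c (Outrad K + e).
Proof.
move=> [e_ge0 [r [Kcr le_e]]] k Kk; apply: le_trans (Kcr k Kk) _.
have := enclosing_radius_ge0 Kcr; have := Outrad_ge0; nra.
Qed.

Lemma approx_circumcenter_sqdist c1 e1 c2 e2 :
  approx_circumcenter c1 e1 -> approx_circumcenter c2 e2 ->
  sqdist c1 c2 <= (e1 + e2) ^+ 2.
Proof.
move=> [e1_ge0 [r1 [Kc1 le_e1]]] [e2_ge0 [r2 [Kc2 le_e2]]].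
have := sqdist_enclosing_centers Kc1 Kc2; nra.
Qed.

Lemma approx_circumcenter_coord c1 e1 c2 e2 i :
  approx_circumcenter c1 e1 -> approx_circumcenter c2 e2 ->
  c2 ord0 i - e2 <= c1 ord0 i + e1.
Proof.
move=> ac1 ac2; have le_sq := le_trans (sqr_coord_le_sqdist c2 c1 i)
  (approx_circumcenter_sqdist ac2 ac1).
by case: ac1 => e1_ge0 _; case: ac2 => e2_ge0 _; nra.
Qed.

Lemma approx_circumcenter_exists e : 0 < e -> exists c, approx_circumcenter c e.
Proof.
move=> e_gt0; set s := Num.sqrt (Outrad K ^+ 2 + e ^+ 2 / 4).
have s_gt : Outrad K < s.
  have := exprn_gt0 2 e_gt0; have := sqr_ge0 (Outrad K) => ? ?.
  by rewrite -[ltLHS]ger0_norm ?Outrad_ge0 // -sqrtr_sqr ltr_sqrt; lra.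
rewrite -subr_gt0 in s_gt.
have [c [r [Kcr]]] := Outrad_adherent s_gt; rewrite addrC subrK => r_lt.
exists c; split; [exact: ltW | exists r; split => //].
have s_sq : s ^+ 2 = Outrad K ^+ 2 + e ^+ 2 / 4.
  by rewrite sqr_sqrtr // addr_ge0 ?divr_ge0 ?sqr_ge0.
have := enclosing_radius_ge0 Kcr; nra.
Qed.

Let lower_estimates i :=
  [set v | exists c e, approx_circumcenter c e /\ v = c ord0 i - e].

Definition circumcenter : 'rV[R]_n := \row_i sup (lower_estimates i).

Lemma circumcenter_coord c e i : approx_circumcenter c e ->
  c ord0 i - e <= circumcenter ord0 i <= c ord0 i + e.
Proof.
move=> ac; rewrite mxE.
have ub : ubound (lower_estimates i) (c ord0 i + e).
  by move=> _ [c' [e' [ac' ->]]]; apply: approx_circumcenter_coord ac ac'.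
apply/andP; split; last by apply: ge_sup => //; exists (c ord0 i - e), c, e.
by apply: ub_le_sup; [exists (c ord0 i + e) | exists c, e].
Qed.

Lemma edist_circumcenter c e :
  approx_circumcenter c e -> edist circumcenter c <= Num.sqrt n%:R * e.
Proof.
move=> ac; have e_ge0 := ac.1.
rewrite edist_le_sqr ?mulr_ge0 ?sqrtr_ge0 // exprMn sqr_sqrtr // mulr_natl.
rewrite -[X in _ *+ X]card_ord -sumr_const; apply: ler_sum => i _.
by have /andP[] := circumcenter_coord i ac; nra.
Qed.

Lemma circumcenterP : K `<=` cball circumcenter (Outrad K).
Proof.
move=> k Kk; apply/ler_addgt0Pr => eps eps_gt0.
set e := eps / (Num.sqrt n%:R + 1).
have sqrtn1_gt0 : 0 < Num.sqrt n%:R + 1 :> R.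
  by rewrite ltr_wpDl ?sqrtr_ge0.
have e_gt0 : 0 < e by rewrite divr_gt0.
have eps_eq : eps = Num.sqrt n%:R * e + e.
  by rewrite -[X in _ + X]mul1r -mulrDl mulrC divfK ?gt_eqF.
have [c ac] := approx_circumcenter_exists e_gt0.
apply: le_trans (edist_triangle _ c _) _.
have := edist_circumcenter ac; have := approx_circumcenter_enclosing ac Kk.
rewrite /cball /=; lra.
Qed.

End Circumcenter.

Section Duality.
Variables (R : realType) (n : nat) (K : set 'rV[R]_n).

Lemma cball_sub_cdual x r : K `<=` cball x r -> cball x (1 - r) `<=` cdual K.
Proof.
move=> Kxr y xy k Kk; rewrite in_setE /cball /=.
have := edist_triangle k x y; have := Kxr k Kk; rewrite /cball /= edistC.
move: xy; rewrite /cball /=; lra.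
Qed.

Lemma enclosing_of_cball_sub_cdual y s : (0 < n)%N -> 0 <= s ->
  cball y s `<=` cdual K -> K `<=` cball y (1 - s).
Proof.
move=> n_gt0 s_ge0 ys_sub k Kk; rewrite /cball /=.
have [z [yz zk]] := edist_extend y k n_gt0 s_ge0.
have /ys_sub /(_ k Kk) : cball y s z by rewrite /cball /= yz.
by rewrite in_setE /cball /= edistC zk; lra.
Qed.

Lemma Inrad_cdual (k0 a : 'rV[R]_n) : (0 < n)%N -> K k0 -> K `<=` cball a 1 ->
  Inrad (cdual K) = 1 - Outrad K.
Proof.
move=> n_gt0 Kk0 Ka1; have Outrad_le1 := Outrad_le Kk0 Ka1.
have inner_ball : cball (circumcenter K) (1 - Outrad K) `<=` cdual K.
  exact/cball_sub_cdual/(circumcenterP Kk0 Ka1).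
have ub : ubound [set s | exists y, cball y s `<=` cdual K] (1 - Outrad K).
  move=> s [y ys_sub]; have [s_lt0|s_ge0] := ltP s 0; first lra.
  have := Outrad_le Kk0 (enclosing_of_cball_sub_cdual n_gt0 s_ge0 ys_sub); lra.
apply/le_anti/andP; split.
  by apply: ge_sup => //; exists (1 - Outrad K), (circumcenter K).
by apply: ub_le_sup; [exists (1 - Outrad K) | exists (circumcenter K)].
Qed.

End Duality.

Theorem lemma3p2 (R : realType) (n : nat) (K : set 'rV[R]_n) :
  (1 <= n)%N -> inS K -> K <> set0 -> K <> setT ->
  Outrad K + Inrad (cdual K) = 1 /\
  exists x : 'rV[R]_n,
    (forall y, K `<=` cball y (Outrad K) <-> y = x) /\
    (forall y, cball y (Inrad (cdual K)) `<=` cdual K <-> y = x).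
Proof.
move=> n_gt0 [A KA] /eqP/set0P[k0 Kk0] KT.
have [a Aa] : exists a, A a.
  apply/not_existsP => A0; apply: KT; rewrite KA; apply/seteqP.
  by split => // y _ x Ax; have := A0 x.
have Ka1 : K `<=` cball a 1 by rewrite KA => y /(_ a Aa); rewrite in_setE.
have center := circumcenterP Kk0 Ka1.
have Outrad_le1 := Outrad_le Kk0 Ka1.
rewrite (Inrad_cdual n_gt0 Kk0 Ka1); split; first lra.
exists (circumcenter K); split => y; split => [|->].
- by move=> Ky; apply: circumcenter_unique Kk0 Ka1 _ _ Ky center.
- exact: center.
- have inrad_ge0 : 0 <= 1 - Outrad K by lra.
  move=> /(enclosing_of_cball_sub_cdual n_gt0 inrad_ge0).
  rewrite opprB addrC subrK => Ky.
  exact: circumcenter_unique Kk0 Ka1 _ _ Ky center.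
- exact: cball_sub_cdual.
Qed.
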